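(* Let $\Omega\subseteq\mathbb{R}^n$ be open and connected and let $u\in C^2(\Omega;\mathbb{R}^n)$. For $a\ge0$ set $\mathcal{L}_a:=\{A\in\mathbb{R}^{n\times n}: |A|=\sqrt a,\ \det A\neq0\}$. Consider: (a) there exists $a\ge0$ such that $Du(x)\in\mathcal{L}_a$ for all $x\in\Omega$; (b) $\Delta_\infty u=0$ on $\Omega$. Then (a) implies (b). Conversely, if $u$ is in addition a local diffeomorphism on $\Omega$, then (b) implies (a).
   Context: $|A|^2=\sum_{\alpha,i}A_{\alpha i}^2$. For $u\in C^2(\Omega;\mathbb{R}^n)$, $(\Delta_\infty u)_\alpha:=\sum_{i,j,\beta} D_iu_\alpha\, D_ju_\beta\, D^2_{ij}u_\beta+|Du|^2\sum_{\beta,i}[Du]^\perp_{\alpha\beta}\,D^2_{ii}u_\beta$, where $[Du(x)]^\perp$ is the orthogonal projection of $\mathbb{R}^n$ onto the null space of $Du(x)^\top$. *)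

From Stdlib Require Import Reals ClassicalEpsilon.
From Stdlib Require Fin List.
Import List.ListNotations.
Open Scope R_scope.

Definition Vec (n : nat) := Fin.t n -> R.
Definition Mat (n : nat) := Fin.t n -> Fin.t n -> R.

Fixpoint fsum (n : nat) : (Fin.t n -> R) -> R :=
  match n return (Fin.t n -> R) -> R with
  | O => fun _ => 0
  | S m => fun f => f Fin.F1 + fsum m (fun i => f (Fin.FS i))
  end.

Definition dist {n} (x y : Vec n) : R := sqrt (fsum n (fun k => (x k - y k) ^ 2)).

Definition is_open {n} (O : Vec n -> Prop) : Prop :=
  forall x, O x -> exists r, r > 0 /\ forall y, dist x y < r -> O y.

Definition is_connected {n} (O : Vec n -> Prop) : Prop :=
  forall U V : Vec n -> Prop, is_open U -> is_open V ->
    (forall x, O x -> U x \/ V x) ->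
    (exists x, O x /\ U x) -> (exists x, O x /\ V x) ->
    exists x, O x /\ U x /\ V x.

Definition cont_at {n} (f : Vec n -> R) (x : Vec n) : Prop :=
  forall eps, eps > 0 -> exists d, d > 0 /\
    forall y, dist x y < d -> Rabs (f y - f x) < eps.

Definition shift {n} (x : Vec n) (i : Fin.t n) (t : R) : Vec n :=
  fun k => if Fin.eq_dec k i then x k + t else x k.

Definition has_pd {n} (f : Vec n -> R) (i : Fin.t n) (x : Vec n) : Prop :=
  exists l, derivable_pt_lim (fun t => f (shift x i t)) 0 l.

(* the partial derivative D_i f (x) (meaningful when it exists; limits are unique) *)
Definition Dp {n} (f : Vec n -> R) (i : Fin.t n) (x : Vec n) : R :=
  epsilon (inhabits 0) (fun l => derivable_pt_lim (fun t => f (shift x i t)) 0 l).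

Definition C1_scal_on {n} (O : Vec n -> Prop) (f : Vec n -> R) : Prop :=
  forall x, O x -> cont_at f x /\
    forall i, has_pd f i x /\ cont_at (Dp f i) x.

Definition C2_scal_on {n} (O : Vec n -> Prop) (f : Vec n -> R) : Prop :=
  forall x, O x -> cont_at f x /\
    forall i, has_pd f i x /\ cont_at (Dp f i) x /\
      forall j, has_pd (Dp f i) j x /\ cont_at (Dp (Dp f i) j) x.

Definition C1_on {n} (O : Vec n -> Prop) (u : Vec n -> Vec n) : Prop :=
  forall a, C1_scal_on O (fun y => u y a).
Definition C2_on {n} (O : Vec n -> Prop) (u : Vec n -> Vec n) : Prop :=
  forall a, C2_scal_on O (fun y => u y a).

(* Du(x)_{alpha i} = D_i u_alpha (x) *)
Definition Du {n} (u : Vec n -> Vec n) (x : Vec n) : Mat n :=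
  fun a i => Dp (fun y => u y a) i x.
(* D^2_{ij} u_beta (x) = D_i D_j u_beta (x) *)
Definition D2u {n} (u : Vec n -> Vec n) (x : Vec n) (b i j : Fin.t n) : R :=
  Dp (Dp (fun y => u y b) j) i x.

Definition frob2 {n} (A : Mat n) : R := fsum n (fun a => fsum n (fun i => A a i ^ 2)).

(* determinant: Laplace expansion along the first row, on nat-indexed matrices *)
Fixpoint detN (m : nat) (A : nat -> nat -> R) : R :=
  match m with
  | O => 1
  | S k => List.fold_right Rplus 0
      (List.map (fun j => (-1) ^ j * A 0%nat j *
              detN k (fun r c => A (S r) (if Nat.ltb c j then c else S c)))
           (List.seq 0 (S k)))
  end.

Definition toN {n} (A : Mat n) : nat -> nat -> R :=
  fun r c => match Fin.of_nat r n, Fin.of_nat c n with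
             | inleft i, inleft j => A i j
             | _, _ => 0
             end.

Definition det {n} (A : Mat n) : R := detN n (toN A).

Definition in_La {n} (a : R) (A : Mat n) : Prop := sqrt (frob2 A) = sqrt a /\ det A <> 0.

(* P is (the matrix of) the orthogonal projection of R^n onto ker(M^T) *)
Definition is_proj_ker {n} (M P : Mat n) : Prop :=
  forall v : Vec n,
    let w := fun a => fsum n (fun b => P a b * v b) in
    (forall i, fsum n (fun a => M a i * w a) = 0) /\
    (forall z : Vec n, (forall i, fsum n (fun a => M a i * z a) = 0) ->
        fsum n (fun a => (v a - w a) * z a) = 0).

Definition proj_ker {n} (M : Mat n) : Mat n :=
  epsilon (inhabits (fun _ _ => 0)) (is_proj_ker M).

Definition inf_lap {n} (u : Vec n -> Vec n) (x : Vec n) (a : Fin.t n) : R :=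
  let A := Du u x in
  let P := proj_ker A in
  fsum n (fun i => fsum n (fun j => fsum n (fun b =>
      A a i * A b j * D2u u x b i j)))
  + frob2 A * fsum n (fun b => fsum n (fun i => P a b * D2u u x b i i)).

Definition local_diffeo_on {n} (O : Vec n -> Prop) (u : Vec n -> Vec n) : Prop :=
  forall x, O x -> exists (U V : Vec n -> Prop) (v : Vec n -> Vec n),
    is_open U /\ U x /\ (forall y, U y -> O y) /\ is_open V /\
    (forall y, U y -> V (u y) /\ forall k, v (u y) k = y k) /\
    (forall w, V w -> U (v w) /\ forall k, u (v w) k = w k) /\
    C1_on V v.

(* For [u] of class C^2 on an open connected [Omega], write [A = Du(x)] and
   [G_i = (1/2) D_i |Du|^2 = sum_{b,j} D_j u_b D_i D_j u_b].  Regrouping the first term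
   of [Delta_infty u] gives
       (Delta_infty u)_al = (A G)_al + |A|^2 ([A]^perp Delta u)_al.
   If [det A <> 0] then [ker A^T = 0], so the projection [[A]^perp] is zero and
   [Delta_infty u = A G] (lemma [inf_lap_nondegenerate]).
   - (a) => (b): [|Du|^2] is constant, so [G = 0] and [Delta_infty u = A G = 0].
   - (b) => (a): differentiating [u (v w) = w] for a local inverse [v] shows that [A] has
     a right inverse, so [det A <> 0]; then [A G = 0] forces [G = 0], i.e. all partial
     derivatives of [|Du|^2] vanish; by the mean value theorem along coordinate paths
     [|Du|^2] is locally constant, hence constant on the connected set [Omega]. *)

From Pilot Require Import Defs.
From Stdlib Require Import Reals Lra Lia.
From Stdlib Require Import FunctionalExtensionality ClassicalEpsilon.
From mathcomp Require all_boot all_algebra Rstruct.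
Open Scope R_scope.

Definition fin_index {n} (i : Fin.t n) : nat := proj1_sig (Fin.to_nat i).

Lemma fin_index_lt n (i : Fin.t n) : (fin_index i < n)%nat.
Proof. unfold fin_index. destruct (Fin.to_nat i); simpl; auto. Qed.

Lemma fin_index_FS n (i : Fin.t n) : fin_index (Fin.FS i) = S (fin_index i).
Proof. unfold fin_index. simpl. destruct (Fin.to_nat i); reflexivity. Qed.

Lemma fin_index_inj n (i j : Fin.t n) : fin_index i = fin_index j -> i = j.
Proof. apply Fin.to_nat_inj. Qed.

Lemma fsum_ext n (f g : Fin.t n -> R) : (forall i, f i = g i) -> fsum n f = fsum n g.
Proof.
  induction n; intros H; simpl; [reflexivity|].
  rewrite H. f_equal. apply IHn. intros; apply H.
Qed.

Lemma fsum_plus n (f g : Fin.t n -> R) : fsum n (fun i => f i + g i) = fsum n f + fsum n g.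
Proof.
  induction n; simpl; [ring|]. rewrite (IHn (fun i => f (Fin.FS i)) (fun i => g (Fin.FS i))). ring.
Qed.

Lemma fsum_minus n (f g : Fin.t n -> R) : fsum n (fun i => f i - g i) = fsum n f - fsum n g.
Proof.
  induction n; simpl; [ring|]. rewrite (IHn (fun i => f (Fin.FS i)) (fun i => g (Fin.FS i))). ring.
Qed.

Lemma fsum_scal n c (f : Fin.t n -> R) : fsum n (fun i => c * f i) = c * fsum n f.
Proof.
  induction n; simpl; [ring|]. rewrite (IHn (fun i => f (Fin.FS i))). ring.
Qed.

Lemma fsum_const n c : fsum n (fun _ => c) = INR n * c.
Proof. induction n; simpl fsum; [simpl; ring|]. rewrite IHn, S_INR. ring. Qed.

Lemma fsum_zero n (f : Fin.t n -> R) : (forall i, f i = 0) -> fsum n f = 0.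
Proof.
  induction n; intros H; simpl; [reflexivity|]. rewrite H, IHn; [ring|]. intros; apply H.
Qed.

Lemma fsum_swap n m (F : Fin.t n -> Fin.t m -> R) :
  fsum n (fun i => fsum m (fun j => F i j)) = fsum m (fun j => fsum n (fun i => F i j)).
Proof.
  induction n; simpl.
  - symmetry. apply fsum_zero. reflexivity.
  - rewrite IHn, <- fsum_plus. reflexivity.
Qed.

Lemma fsum_le n (f g : Fin.t n -> R) : (forall i, f i <= g i) -> fsum n f <= fsum n g.
Proof.
  induction n; intros H; simpl; [lra|].
  pose proof (H Fin.F1).
  pose proof (IHn (fun i => f (Fin.FS i)) (fun i => g (Fin.FS i)) (fun i => H _)). lra.
Qed.

Lemma fsum_nonneg n (f : Fin.t n -> R) : (forall i, 0 <= f i) -> 0 <= fsum n f.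
Proof.
  intros H. pose proof (fsum_le n (fun _ => 0) f H) as Hle.
  rewrite fsum_zero in Hle by reflexivity. exact Hle.
Qed.

Lemma fsum_abs n (f : Fin.t n -> R) : Rabs (fsum n f) <= fsum n (fun i => Rabs (f i)).
Proof.
  induction n; simpl.
  - rewrite Rabs_R0. lra.
  - eapply Rle_trans; [apply Rabs_triang|]. pose proof (IHn (fun i => f (Fin.FS i))). lra.
Qed.

Lemma fsum_single n (f : Fin.t n -> R) b : (forall a, a <> b -> f a = 0) -> fsum n f = f b.
Proof.
  induction n; intros H.
  - apply (Fin.case0 (fun b => fsum 0 f = f b) b).
  - revert H. apply (Fin.caseS' b); clear b; [intros H|intros p H]; simpl.
    + rewrite fsum_zero; [ring|]. intros i. apply H. intro e. inversion e.
    + rewrite H by (intro e; inversion e). rewrite (IHn _ p); [ring|].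
      intros a ha. apply H. intro e. apply ha. apply Fin.FS_inj. exact e.
Qed.

Lemma fsum_telescope n (h : nat -> R) :
  fsum n (fun i => h (S (fin_index i)) - h (fin_index i)) = h n - h O.
Proof.
  revert h; induction n; intros h; simpl; [ring|].
  rewrite (fsum_ext _ _ (fun i => h (S (S (fin_index i))) - h (S (fin_index i)))).
  - rewrite (IHn (fun k => h (S k))). unfold fin_index at 1 2. simpl. ring.
  - intros i. rewrite fin_index_FS. reflexivity.
Qed.

Lemma common_radius n (P : Fin.t n -> R -> Prop) :
  (forall i d d', 0 < d' <= d -> P i d -> P i d') ->
  (forall i, exists d, 0 < d /\ P i d) -> exists d, 0 < d /\ forall i, P i d.
Proof.
  induction n; intros Hmono H.
  - exists 1. split; [lra|]. intros i. apply (Fin.case0 (fun i => P i 1) i).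
  - destruct (H Fin.F1) as [d0 [hd0 H0]].
    destruct (IHn (fun i => P (Fin.FS i))) as [d1 [hd1 H1]].
    + intros i d d' hd. apply Hmono. exact hd.
    + intros i. apply H.
    + exists (Rmin d0 d1). split; [apply Rmin_pos; auto|].
      intros i. apply (Fin.caseS' i).
      * apply (Hmono _ d0). split; [apply Rmin_pos; auto|apply Rmin_l]. exact H0.
      * intros j. apply (Hmono _ d1). split; [apply Rmin_pos; auto|apply Rmin_r]. apply H1.
Qed.

Definition id_mat {n} : Mat n := fun a b => if Fin.eq_dec a b then 1 else 0.

Module Determinants.
Import mathcomp.boot.all_boot mathcomp.algebra.all_algebra mathcomp.reals_stdlib.Rstruct.
Import GRing.Theory.

Definition ord_to_fin {n} (i : 'I_n) : Fin.t n := Fin.of_nat_lt (elimT ltP (ltn_ord i)).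

Lemma fin_index_ord_to_fin n (i : 'I_n) : fin_index (ord_to_fin i) = i.
Proof. by rewrite /fin_index /ord_to_fin Fin.to_nat_of_nat. Qed.

Lemma ord_to_fin_surj n (b : Fin.t n) : exists i : 'I_n, ord_to_fin i = b.
Proof.
  exists (Ordinal (introT ltP (fin_index_lt _ b))).
  by apply: fin_index_inj; rewrite fin_index_ord_to_fin.
Qed.

Local Open Scope ring_scope.

Lemma fsum_big n (F : Fin.t n -> R) : fsum n F = \sum_(i < n) F (ord_to_fin i).
Proof.
  elim: n F => [|m IH] F; first by rewrite big_ord0.
  rewrite big_ord_recl /= RplusE IH.
  have -> : ord_to_fin (@ord0 m) = Fin.F1.
    by apply: fin_index_inj; rewrite fin_index_ord_to_fin.
  congr (_ + _); apply: eq_bigr => i _; congr F.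
  by apply: fin_index_inj; rewrite fin_index_FS !fin_index_ord_to_fin lift0.
Qed.

Lemma detN_det m (f : nat -> nat -> R) : detN m f = \det (\matrix_(i < m, j < m) f i j).
Proof.
  elim: m f => [|k IH] f; first by rewrite det_mx00.
  rewrite [detN k.+1 f]/detN -/detN (expand_det_row _ ord0).
  have fold_sum (G : nat -> R) s :
      List.fold_right Rplus 0%R (List.map G s) = \sum_(j <- s) G j.
    by elim: s => [|x s IHs]; rewrite ?big_nil // big_cons /= IHs.
  have seq_iota a l : List.seq a l = iota a l.
    by elim: l a => [|l IHl] a //=; rewrite IHl.
  rewrite fold_sum seq_iota -[iota 0 k.+1]/(index_iota 0 k.+1) big_mkord.
  apply: eq_bigr => j _; rewrite IH RpowE /cofactor mxE add0n mulrCA mulrA.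
  congr (_ * \det _); apply/matrixP => r c; rewrite !mxE lift0 /= /bump.
  have -> : Nat.ltb c j = (c < j)%N.
    by case: (ltnP c j) => h; [apply/Nat.ltb_lt/ltP | apply/Nat.ltb_ge/leP].
  by case: (ltnP c j); rewrite ?add0n ?add1n.
Qed.

Definition to_matrix {n} (A : Mat n) : 'M[R]_n := \matrix_(i, j) A (ord_to_fin i) (ord_to_fin j).

Lemma det_to_matrix n (A : Mat n) : det A = \det (to_matrix A).
Proof.
  have of_nat_inleft p m (h : (p < m)%coq_nat) : Fin.of_nat p m = inleft (Fin.of_nat_lt h).
    elim: p m h => [|p IHp] [|m] h; try by exfalso; apply: (Nat.nlt_0_r _ h).
    - done.
    - by rewrite /= (IHp m (proj2 (Nat.succ_lt_mono p m) h)).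
  rewrite /det detN_det; congr (\det _); apply/matrixP => i j; rewrite !mxE /toN.
  by rewrite (of_nat_inleft _ _ (elimT ltP (ltn_ord i))) (of_nat_inleft _ _ (elimT ltP (ltn_ord j))).
Qed.

Lemma det_neq0_kernel n (A : Mat n) : det A <> 0 ->
  forall z : Vec n, (forall a, fsum n (fun k => A a k * z k) = 0) -> forall b, z b = 0.
Proof.
  move=> hdet z hz b.
  have hunit : to_matrix A \in unitmx by rewrite unitmxE unitfE -det_to_matrix; apply/eqP.
  pose zc : 'cV[R]_n := \col_k z (ord_to_fin k).
  have hAz : to_matrix A *m zc = 0.
    apply/matrixP => a j; rewrite !mxE -[RHS](hz (ord_to_fin a)) fsum_big.
    by apply: eq_bigr => k _; rewrite !mxE.
  have : zc = 0 by rewrite -(mulKmx hunit zc) hAz mulmx0.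
  by case: (ord_to_fin_surj _ b) => k <- /matrixP /(_ k ord0); rewrite !mxE.
Qed.

Lemma det_transpose n (A : Mat n) : det (fun a i => A i a) = det A.
Proof.
  rewrite !det_to_matrix -det_tr; congr (\det _).
  by apply/matrixP => i j; rewrite !mxE.
Qed.

Lemma det_neq0_of_right_inverse n (A B : Mat n) :
  (forall a b, fsum n (fun k => A a k * B k b) = id_mat a b) ->
  det A <> 0.
Proof.
  move=> hAB.
  have hmul : to_matrix A *m to_matrix B = 1%:M.
    apply/matrixP => i j; rewrite !mxE.
    rewrite (eq_bigr (fun k => A (ord_to_fin i) (ord_to_fin k) * B (ord_to_fin k) (ord_to_fin j)));
      last by move=> k _; rewrite !mxE.
    rewrite -(fsum_big _ (fun k => A (ord_to_fin i) k * B k (ord_to_fin j))) hAB /id_mat.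
    case: (Fin.eq_dec _ _) => e; case: eqP => e' //.
    - by case: e'; apply/val_inj; rewrite /= -(fin_index_ord_to_fin _ i) e fin_index_ord_to_fin.
    - by case: e; rewrite e'.
  move=> h0; have := congr1 determinant hmul.
  by rewrite det_mulmx det1 -det_to_matrix h0 mul0r => /eqP; rewrite eq_sym oner_eq0.
Qed.
End Determinants.

Lemma dist_shift n (x : Vec n) i t : Defs.dist x (shift x i t) = Rabs t.
Proof.
  unfold Defs.dist. rewrite (fsum_single _ _ i).
  - unfold shift. destruct (Fin.eq_dec i i) as [_|c]; [|congruence].
    replace ((x i - (x i + t)) ^ 2) with (t * t) by ring. apply sqrt_Rsqr_abs.
  - intros a ha. unfold shift. destruct (Fin.eq_dec a i); [congruence|]. ring.
Qed.

Lemma dist_mono n (p q y : Vec n) :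
  (forall k, Rabs (y k - p k) <= Rabs (q k - p k)) -> Defs.dist p y <= Defs.dist p q.
Proof.
  intros H. unfold Defs.dist. apply sqrt_le_1_alt. apply fsum_le. intros k.
  specialize (H k). pose proof (Rabs_pos (y k - p k)).
  rewrite <- (pow2_abs (p k - y k)), <- (pow2_abs (p k - q k)), !(Rabs_minus_sym (p k)).
  nra.
Qed.

Lemma dist_lt_of_coords n (p y : Vec n) r : 0 < r ->
  (forall k, Rabs (y k - p k) < r / (INR n + 1)) -> Defs.dist p y < r.
Proof.
  intros hr H. unfold Defs.dist.
  pose proof (pos_INR n) as hn.
  set (e := r / (INR n + 1)) in H.
  assert (he : e * (INR n + 1) = r) by (unfold e; field; lra).
  assert (Hs : fsum n (fun k => (p k - y k) ^ 2) <= fsum n (fun _ => e * e)).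
  { apply fsum_le. intros k. specialize (H k).
    rewrite <- pow2_abs, Rabs_minus_sym. pose proof (Rabs_pos (y k - p k)). nra. }
  rewrite fsum_const in Hs.
  rewrite <- (sqrt_Rsqr r) by lra. apply sqrt_lt_1_alt. split.
  - apply fsum_nonneg. intros; apply pow2_ge_0.
  - unfold Rsqr. rewrite <- he. assert (0 < e) by (unfold e; apply Rdiv_lt_0_compat; lra). nra.
Qed.

Lemma shift_shift n (z : Vec n) i s t : shift (shift z i s) i t = shift z i (s + t).
Proof.
  apply functional_extensionality; intros k. unfold shift.
  destruct (Fin.eq_dec k i); ring.
Qed.

Lemma shift0 n (z : Vec n) i : shift z i 0 = z.
Proof.
  apply functional_extensionality; intros k. unfold shift.
  destruct (Fin.eq_dec k i); ring.
Qed.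

Lemma Dp_correct n (f : Vec n -> R) i x :
  has_pd f i x -> derivable_pt_lim (fun t => f (shift x i t)) 0 (Dp f i x).
Proof. intros H. unfold Dp. apply epsilon_spec. exact H. Qed.

Lemma Dp_unique n (f : Vec n -> R) i x l :
  derivable_pt_lim (fun t => f (shift x i t)) 0 l -> Dp f i x = l.
Proof.
  intros H. eapply uniqueness_limite; [|exact H]. apply Dp_correct. exists l; exact H.
Qed.

Lemma derivable_pt_lim_local (f g : R -> R) l :
  derivable_pt_lim f 0 l -> (exists r, 0 < r /\ forall t, Rabs t < r -> f t = g t) ->
  derivable_pt_lim g 0 l.
Proof.
  intros H [r [hr E]] eps heps. destruct (H eps heps) as [d hd].
  assert (hm : 0 < Rmin d r) by (apply Rmin_pos; [apply cond_pos|exact hr]).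
  exists (mkposreal _ hm). intros h h0 hh. simpl in hh.
  pose proof (Rmin_l d r); pose proof (Rmin_r d r).
  rewrite <- (E (0 + h)), <- (E 0).
  - apply hd; auto. lra.
  - rewrite Rabs_R0. exact hr.
  - rewrite Rplus_0_l. lra.
Qed.

Lemma coordinate_mvt n (g : Vec n -> R) z i c :
  (forall s, Rabs s <= Rabs c -> has_pd g i (shift z i s)) ->
  exists th, Rabs th <= Rabs c /\ g (shift z i c) - g z = Dp g i (shift z i th) * c.
Proof.
  intros H.
  assert (Hder : forall s, Rabs s <= Rabs c ->
            derivable_pt_lim (fun t => g (shift z i t)) s (Dp g i (shift z i s))).
  { intros s hs eps heps. destruct (Dp_correct _ _ _ _ (H s hs) eps heps) as [d hd].
    exists d. intros h h0 hh. specialize (hd h h0 hh).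
    rewrite !shift_shift, Rplus_0_l, Rplus_0_r in hd. exact hd. }
  destruct (Rtotal_order c 0) as [hc|[hc|hc]].
  - destruct (MVT_cor2 (fun t => g (shift z i t)) (fun t => Dp g i (shift z i t)) c 0 hc)
      as [th [E hth]].
    + intros s hs. apply Hder. rewrite !Rabs_left1 by lra. lra.
    + exists th. rewrite shift0 in E. split; [|lra].
      rewrite Rabs_left1, Rabs_left by lra. lra.
  - subst c. exists 0. split; [lra|]. rewrite shift0. ring.
  - destruct (MVT_cor2 (fun t => g (shift z i t)) (fun t => Dp g i (shift z i t)) 0 c hc)
      as [th [E hth]].
    + intros s hs. apply Hder. rewrite !Rabs_right by lra. lra.
    + exists th. rewrite shift0 in E. split; [|lra].
      rewrite !Rabs_right by lra. lra.
Qed.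

(* [mix k p q] takes its first [k] coordinates from [q] and the others from [p];
   it walks from [p] to [q] one coordinate at a time. *)
Definition mix {n} (k : nat) (p q : Vec n) : Vec n :=
  fun j => if Nat.ltb (fin_index j) k then q j else p j.

Lemma mix_step n (p q : Vec n) i :
  mix (S (fin_index i)) p q = shift (mix (fin_index i) p q) i (q i - p i).
Proof.
  apply functional_extensionality; intros j. unfold mix, shift.
  destruct (Fin.eq_dec j i) as [e|ne].
  - subst j. rewrite (proj2 (Nat.ltb_lt _ _) (Nat.lt_succ_diag_r _)).
    rewrite (proj2 (Nat.ltb_ge _ _) (Nat.le_refl _)). ring.
  - assert (fin_index j <> fin_index i) by (intro e; apply ne, fin_index_inj, e).
    destruct (Nat.ltb (fin_index j) (fin_index i)) eqn:E1.
    + apply Nat.ltb_lt in E1. rewrite (proj2 (Nat.ltb_lt _ _)) by lia. reflexivity.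
    + apply Nat.ltb_ge in E1. rewrite (proj2 (Nat.ltb_ge _ _)) by lia. reflexivity.
Qed.

Lemma telescope n (g : Vec n -> R) (p q : Vec n) :
  g q - g p = fsum n (fun i => g (mix (S (fin_index i)) p q) - g (mix (fin_index i) p q)).
Proof.
  rewrite (fsum_telescope n (fun k => g (mix k p q))).
  assert (Hn : mix n p q = q).
  { apply functional_extensionality; intros j. unfold mix.
    rewrite (proj2 (Nat.ltb_lt _ _) (fin_index_lt n j)). reflexivity. }
  rewrite Hn. reflexivity.
Qed.

Lemma mix_step_mvt n (g : Vec n -> R) (p q : Vec n) i :
  (forall y, Defs.dist p y <= Defs.dist p q -> has_pd g i y) ->
  exists xi, Defs.dist p xi <= Defs.dist p q /\
    g (mix (S (fin_index i)) p q) - g (mix (fin_index i) p q) = Dp g i xi * (q i - p i).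
Proof.
  intros H.
  assert (Hball : forall s, Rabs s <= Rabs (q i - p i) ->
            Defs.dist p (shift (mix (fin_index i) p q) i s) <= Defs.dist p q).
  { intros s hs. apply dist_mono. intros k. unfold shift, mix.
    destruct (Fin.eq_dec k i) as [e|ne].
    - subst k. rewrite (proj2 (Nat.ltb_ge _ _) (Nat.le_refl _)).
      replace (p i + s - p i) with s by ring. exact hs.
    - destruct (Nat.ltb (fin_index k) (fin_index i)); [lra|].
      replace (p k - p k) with 0 by ring. rewrite Rabs_R0. apply Rabs_pos. }
  rewrite mix_step.
  destruct (coordinate_mvt n g (mix (fin_index i) p q) i (q i - p i)) as [th [hth E]].
  - intros s hs. apply H, Hball, hs.
  - exists (shift (mix (fin_index i) p q) i th). split; [apply Hball, hth|exact E].
Qed.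

Lemma zero_partials_constant_on_ball n (g : Vec n -> R) p r :
  (forall y, Defs.dist p y < r -> forall i, has_pd g i y /\ Dp g i y = 0) ->
  forall q, Defs.dist p q < r -> g q = g p.
Proof.
  intros H q hq. apply Rminus_diag_uniq. rewrite telescope. apply fsum_zero. intros i.
  destruct (mix_step_mvt n g p q i) as [xi [hxi E]].
  - intros y hy. apply (H y). lra.
  - rewrite E, (proj2 (H xi ltac:(lra) i)). ring.
Qed.

Lemma linearization n (g : Vec n -> R) p r :
  0 < r -> (forall y, Defs.dist p y < r -> forall i, has_pd g i y) ->
  (forall i, cont_at (Dp g i) p) ->
  forall e, 0 < e -> exists rho, 0 < rho /\ forall q, Defs.dist p q < rho ->
    Rabs (g q - g p - fsum n (fun i => Dp g i p * (q i - p i)))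
      <= e * fsum n (fun i => Rabs (q i - p i)).
Proof.
  intros hr Hpd Hc e he.
  destruct (common_radius n
    (fun i d => forall y, Defs.dist p y < d -> Rabs (Dp g i y - Dp g i p) < e))
    as [d [hd Hd]].
  { intros i d d' hd' H y hy. apply H. lra. }
  { intros i. destruct (Hc i e he) as [d [hd H]]. exists d. split; [lra|exact H]. }
  exists (Rmin r d). split; [apply Rmin_pos; lra|]. intros q hq.
  pose proof (Rmin_l r d); pose proof (Rmin_r r d).
  rewrite telescope, <- fsum_minus, <- fsum_scal.
  eapply Rle_trans; [apply fsum_abs|]. apply fsum_le. intros i.
  destruct (mix_step_mvt n g p q i) as [xi [hxi E]].
  { intros y hy. apply Hpd. lra. }
  rewrite E.
  replace (Dp g i xi * (q i - p i) - Dp g i p * (q i - p i))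
    with ((Dp g i xi - Dp g i p) * (q i - p i)) by ring.
  rewrite Rabs_mult. apply Rmult_le_compat_r; [apply Rabs_pos|].
  left. apply Hd. lra.
Qed.

Lemma difference_quotient_close (f : R -> R) c eta sigma :
  derivable_pt_lim f 0 c -> 0 < eta -> 0 < sigma ->
  exists d, 0 < d /\ forall t, t <> 0 -> Rabs t < d ->
    Rabs ((f t - f 0) / t - c) < eta /\ Rabs (f t - f 0) < sigma.
Proof.
  intros H heta hsigma.
  destruct (H eta heta) as [d0 hd0].
  pose proof (Rabs_pos (c)) as hc.
  set (K := Rabs c + eta).
  assert (hK : 0 < K) by (unfold K; lra).
  exists (Rmin d0 (sigma / K)).
  split; [apply Rmin_pos; [apply cond_pos|apply Rdiv_lt_0_compat; lra]|].
  intros t ht0 ht. pose proof (Rmin_l d0 (sigma / K)); pose proof (Rmin_r d0 (sigma / K)).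
  specialize (hd0 t ht0 ltac:(lra)). rewrite Rplus_0_l in hd0.
  split; [exact hd0|].
  set (Q := (f t - f 0) / t) in *.
  assert (hQ : Rabs Q < K).
  { unfold K. replace Q with ((Q - c) + c) by ring.
    pose proof (Rabs_triang (Q - c) c). lra. }
  replace (f t - f 0) with (t * Q) by (unfold Q; field; exact ht0).
  rewrite Rabs_mult. pose proof (Rabs_pos t). pose proof (Rabs_pos Q).
  replace sigma with (sigma / K * K) by (field; lra).
  apply Rle_lt_trans with (Rabs t * K); [apply Rmult_le_compat_l; lra|].
  apply Rmult_lt_compat_r; lra.
Qed.

Lemma difference_quotient_error n (D c p q : Vec n) t eta e Delta :
  t <> 0 -> 0 <= e -> eta <= 1 ->
  (forall k, Rabs ((q k - p k) / t - c k) < eta) ->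
  Rabs (Delta - fsum n (fun k => D k * (q k - p k))) <= e * fsum n (fun k => Rabs (q k - p k)) ->
  Rabs (Delta / t - fsum n (fun k => D k * c k))
    <= e * fsum n (fun k => Rabs (c k) + 1) + eta * fsum n (fun k => Rabs (D k)).
Proof.
  intros ht0 he heta Hq Hlin.
  set (L := fsum n (fun k => D k * (q k - p k))) in *.
  assert (Hsplit : Delta / t - fsum n (fun k => D k * c k)
      = (Delta - L) / t + fsum n (fun k => D k * ((q k - p k) / t - c k))).
  { rewrite (fsum_ext _ (fun k => D k * ((q k - p k) / t - c k))
                         (fun k => / t * (D k * (q k - p k)) - D k * c k))
      by (intros k; field; exact ht0).
    rewrite fsum_minus, fsum_scal. unfold L. field. exact ht0. }
  assert (Hlinear : Rabs ((Delta - L) / t) <= e * fsum n (fun k => Rabs (c k) + 1)).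
  { unfold Rdiv. rewrite Rabs_mult, Rabs_inv.
    apply Rle_trans with (e * fsum n (fun k => Rabs (q k - p k)) * / Rabs t).
    - apply Rmult_le_compat_r; [left; apply Rinv_0_lt_compat, Rabs_pos_lt, ht0|exact Hlin].
    - rewrite Rmult_assoc. apply Rmult_le_compat_l; [exact he|].
      rewrite Rmult_comm, <- fsum_scal. apply fsum_le. intros k.
      rewrite <- Rabs_inv, <- Rabs_mult.
      replace (/ t * (q k - p k)) with ((q k - p k) / t - c k + c k) by (field; exact ht0).
      pose proof (Rabs_triang ((q k - p k) / t - c k) (c k)). pose proof (Hq k). lra. }
  assert (Hcoef : Rabs (fsum n (fun k => D k * ((q k - p k) / t - c k)))
                    <= eta * fsum n (fun k => Rabs (D k))).
  { eapply Rle_trans; [apply fsum_abs|]. rewrite <- fsum_scal. apply fsum_le.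
    intros k. rewrite Rabs_mult, Rmult_comm. apply Rmult_le_compat_r; [apply Rabs_pos|].
    left. apply Hq. }
  rewrite Hsplit. eapply Rle_trans; [apply Rabs_triang|]. lra.
Qed.

Lemma chain_rule n (g : Vec n -> R) p (gam : R -> Vec n) (c : Vec n) r :
  0 < r -> (forall y, Defs.dist p y < r -> forall i, has_pd g i y) ->
  (forall i, cont_at (Dp g i) p) -> gam 0 = p ->
  (forall k, derivable_pt_lim (fun t => gam t k) 0 (c k)) ->
  derivable_pt_lim (fun t => g (gam t)) 0 (fsum n (fun i => Dp g i p * c i)).
Proof.
  intros hr Hpd Hc Hg0 Hd eps heps.
  set (S := fsum n (fun k => Rabs (c k) + 1)).
  set (M := fsum n (fun k => Rabs (Dp g k p))).
  assert (hS : 0 <= S) by (apply fsum_nonneg; intros k; pose proof (Rabs_pos (c k)); lra).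
  assert (hM : 0 <= M) by (apply fsum_nonneg; intros k; apply Rabs_pos).
  set (e := eps / (2 * (S + 1))).
  assert (he : 0 < e) by (unfold e; apply Rdiv_lt_0_compat; lra).
  assert (HeS : e * S < eps / 2).
  { unfold e. apply (Rmult_lt_reg_r (2 * (S + 1))); [lra|].
    replace (eps / (2 * (S + 1)) * S * (2 * (S + 1))) with (eps * S) by (field; lra). nra. }
  set (eta := Rmin 1 (eps / (2 * (M + 1)))).
  assert (heta : 0 < eta) by (apply Rmin_pos; [lra|apply Rdiv_lt_0_compat; lra]).
  assert (HetaM : eta * M <= eps / 2).
  { apply Rle_trans with (eps / (2 * (M + 1)) * M).
    - apply Rmult_le_compat_r; [exact hM|apply Rmin_r].
    - apply (Rmult_le_reg_r (2 * (M + 1))); [lra|].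
      replace (eps / (2 * (M + 1)) * M * (2 * (M + 1))) with (eps * M) by (field; lra). nra. }
  destruct (linearization n g p r hr Hpd Hc e he) as [rho [hrho Hlin]].
  pose proof (pos_INR n) as hn.
  destruct (common_radius n (fun k d => forall t, t <> 0 -> Rabs t < d ->
      Rabs ((gam t k - p k) / t - c k) < eta /\ Rabs (gam t k - p k) < rho / (INR n + 1)))
    as [d [hd Hcurve]].
  { intros k d d' hd' H t ht0 ht. apply H; [exact ht0|lra]. }
  { intros k. rewrite <- Hg0.
    apply (difference_quotient_close (fun t => gam t k)); [apply Hd|exact heta|].
    apply Rdiv_lt_0_compat; lra. }
  exists (mkposreal d hd). intros t ht0 ht. simpl in ht. rewrite Rplus_0_l, Hg0.
  assert (Hq : forall k, Rabs ((gam t k - p k) / t - c k) < eta /\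
                         Rabs (gam t k - p k) < rho / (INR n + 1))
    by (intros k; apply Hcurve; assumption).
  eapply Rle_lt_trans.
  - apply (difference_quotient_error n (fun k => Dp g k p) c p (gam t) t eta e);
      [exact ht0|lra|apply Rmin_l|intros k; apply Hq|].
    apply Hlin, dist_lt_of_coords; [exact hrho|]. intros k. apply Hq.
  - fold S M. lra.
Qed.

Lemma derivable_pt_lim_fsum n (F : Fin.t n -> R -> R) (l : Fin.t n -> R) x :
  (forall i, derivable_pt_lim (F i) x (l i)) ->
  derivable_pt_lim (fun t => fsum n (fun i => F i t)) x (fsum n l).
Proof.
  revert F l; induction n; intros F l H; simpl.
  - apply derivable_pt_lim_const.
  - apply (derivable_pt_lim_plus (F Fin.F1) (fun t => fsum n (fun i => F (Fin.FS i) t))).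
    + apply H.
    + apply (IHn (fun i => F (Fin.FS i)) (fun i => l (Fin.FS i))). intros; apply H.
Qed.

Lemma derivable_pt_lim_square (F : R -> R) x l :
  derivable_pt_lim F x l -> derivable_pt_lim (fun t => F t ^ 2) x (2 * F x * l).
Proof.
  intros H.
  replace (fun t => F t ^ 2) with (mult_fct F F)
    by (apply functional_extensionality; intros t; unfold mult_fct; ring).
  replace (2 * F x * l) with (l * F x + F x * l) by ring.
  apply derivable_pt_lim_mult; exact H.
Qed.

Lemma derivable_pt_lim_shift_coord n (x : Vec n) i k :
  derivable_pt_lim (fun t => shift x i t k) 0 (if Fin.eq_dec k i then 1 else 0).
Proof.
  unfold shift. destruct (Fin.eq_dec k i).
  - replace (fun t => x k + t) with (plus_fct (fct_cte (x k)) id)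
      by (apply functional_extensionality; intros t; reflexivity).
    replace 1 with (0 + 1) by ring.
    apply derivable_pt_lim_plus; [apply derivable_pt_lim_const|apply derivable_pt_lim_id].
  - apply derivable_pt_lim_const.
Qed.

Lemma C1_of_C2 n (O : Vec n -> Prop) (u : Vec n -> Vec n) : C2_on O u -> C1_on O u.
Proof.
  intros H a x hx. destruct (H a x hx) as [Hx Hi]. split; [exact Hx|].
  intros i. destruct (Hi i) as [Hpd [Hc _]]. split; assumption.
Qed.

Lemma jacobian_right_inverse n (O W : Vec n -> Prop) (f g : Vec n -> Vec n) p q :
  is_open O -> C1_on O f -> O p -> is_open W -> W q -> g q = p ->
  (forall k b, has_pd (fun w => g w k) b q) ->
  (forall w, W w -> forall k, f (g w) k = w k) ->
  forall a b, fsum n (fun k => Du f p a k * Du g q k b) = id_mat a b.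
Proof.
  intros HO Hf Hp HW Hq Hgq Hg Hfg a b.
  destruct (HO p Hp) as [rO [hrO HrO]].
  destruct (HW q Hq) as [rW [hrW HrW]].
  assert (Hchain : derivable_pt_lim (fun t => f (g (shift q b t)) a) 0
                     (fsum n (fun k => Du f p a k * Du g q k b))).
  { apply (chain_rule n (fun y => f y a) p (fun t => g (shift q b t)) (fun k => Du g q k b) rO).
    - exact hrO.
    - intros y hy i. apply (Hf a y (HrO y hy)).
    - intros i. apply (Hf a p Hp).
    - rewrite shift0. exact Hgq.
    - intros k. exact (Dp_correct _ _ _ _ (Hg k b)). }
  apply (uniqueness_limite (fun t => f (g (shift q b t)) a) 0); [exact Hchain|]. unfold id_mat.
  apply (derivable_pt_lim_local (fun t => shift q b t a)); [apply derivable_pt_lim_shift_coord|].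
  exists rW. split; [exact hrW|]. intros t ht. symmetry.
  apply Hfg, HrW. rewrite dist_shift. exact ht.
Qed.

Lemma local_diffeo_det n (O : Vec n -> Prop) (u : Vec n -> Vec n) x :
  is_open O -> C2_on O u -> local_diffeo_on O u -> O x -> det (Du u x) <> 0.
Proof.
  intros HO Hu HL hx.
  destruct (HL x hx) as [U [V [v [_ [HUx [_ [HVo [HUV [HVU HvC]]]]]]]]].
  destruct (HUV x HUx) as [HVux Hvux].
  apply (Determinants.det_neq0_of_right_inverse _ _ (Du v (u x))).
  apply (jacobian_right_inverse n O V u v x (u x)).
  - exact HO.
  - apply C1_of_C2, Hu.
  - exact hx.
  - exact HVo.
  - exact HVux.
  - apply functional_extensionality; exact Hvux.
  - intros k b. apply (HvC k (u x) HVux).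
  - intros w hw. apply (HVU w hw).
Qed.

Lemma frob2_nonneg n (A : Mat n) : 0 <= frob2 A.
Proof.
  unfold frob2. apply fsum_nonneg; intros a. apply fsum_nonneg; intros i. apply pow2_ge_0.
Qed.

Definition half_grad_frob2 {n} (u : Vec n -> Vec n) (x : Vec n) (i : Fin.t n) : R :=
  fsum n (fun b => fsum n (fun j => Du u x b j * D2u u x b i j)).

Lemma frob2_partial n (O : Vec n -> Prop) (u : Vec n -> Vec n) y i :
  C2_on O u -> O y ->
  derivable_pt_lim (fun t => frob2 (Du u (shift y i t))) 0 (2 * half_grad_frob2 u y i).
Proof.
  intros Hu hy. unfold half_grad_frob2, frob2.
  rewrite <- fsum_scal. apply derivable_pt_lim_fsum. intros b.
  rewrite <- fsum_scal. apply derivable_pt_lim_fsum. intros j.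
  rewrite <- Rmult_assoc.
  assert (Hd : derivable_pt_lim (fun t => Du u (shift y i t) b j) 0 (D2u u y b i j)).
  { apply Dp_correct. apply (Hu b y hy). }
  pose proof (derivable_pt_lim_square _ 0 _ Hd) as E. cbv beta in E.
  rewrite shift0 in E. exact E.
Qed.

(* With [Du] invertible, [ker Du^T = 0], so the projection [[Du]^perp] vanishes. *)
Lemma proj_ker_zero n (A : Mat n) : det A <> 0 -> forall a b, proj_ker A a b = 0.
Proof.
  intros Hdet.
  assert (K : forall z : Vec n, (forall i, fsum n (fun a => A a i * z a) = 0) -> forall b, z b = 0).
  { apply (Determinants.det_neq0_kernel n (fun i a => A a i)).
    rewrite Determinants.det_transpose. exact Hdet. }
  assert (HP : is_proj_ker A (proj_ker A)).
  { unfold proj_ker. apply epsilon_spec. exists (fun _ _ => 0).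
    intros v. simpl. split.
    - intros i. apply fsum_zero; intros a. rewrite fsum_zero; [ring|]. intros; ring.
    - intros z hz. apply fsum_zero; intros a. rewrite (K z hz a). ring. }
  intros a b.
  destruct (HP (fun c => if Fin.eq_dec c b then 1 else 0)) as [Hcol _].
  pose proof (K _ Hcol a) as E. simpl in E.
  rewrite (fsum_single _ _ b) in E.
  - destruct (Fin.eq_dec b b); [|congruence]. rewrite <- E. ring.
  - intros c hc. destruct (Fin.eq_dec c b); [congruence|]. ring.
Qed.

Lemma inf_lap_nondegenerate n (u : Vec n -> Vec n) x al :
  det (Du u x) <> 0 ->
  inf_lap u x al = fsum n (fun i => Du u x al i * half_grad_frob2 u x i).
Proof.
  intros Hdet. unfold inf_lap.
  rewrite (fsum_zero n (fun b => fsum n (fun i => proj_ker (Du u x) al b * D2u u x b i i))).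
  - rewrite Rmult_0_r, Rplus_0_r. apply fsum_ext; intros i. unfold half_grad_frob2.
    rewrite <- fsum_scal, fsum_swap. apply fsum_ext; intros j.
    rewrite <- fsum_scal. apply fsum_ext; intros b. ring.
  - intros b. apply fsum_zero. intros i. rewrite proj_ker_zero by exact Hdet. ring.
Qed.

Lemma connected_locally_constant n (O : Vec n -> Prop) (f : Vec n -> R) :
  is_connected O ->
  (forall y, O y -> exists r, r > 0 /\ forall z, Defs.dist y z < r -> O z /\ f z = f y) ->
  forall x y, O x -> O y -> f y = f x.
Proof.
  intros Hconn Hloc x y hx hy. apply NNPP. intros hne.
  assert (Hopen : forall P : R -> Prop, is_open (fun z => O z /\ P (f z))).
  { intros P z [hz Pz]. destruct (Hloc z hz) as [r [hr H]]. exists r. split; [exact hr|].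
    intros w hw. destruct (H w hw) as [Ow Ew]. rewrite Ew. split; assumption. }
  destruct (Hconn (fun z => O z /\ f z = f x) (fun z => O z /\ f z <> f x))
    as [w [_ [[_ e1] [_ e2]]]].
  - apply (Hopen (fun s => s = f x)).
  - apply (Hopen (fun s => s <> f x)).
  - intros z hz. destruct (classic (f z = f x)); [left|right]; auto.
  - exists x. auto.
  - exists y. auto.
  - exact (e2 e1).
Qed.

Lemma constant_norm_inf_harmonic n (O : Vec n -> Prop) (u : Vec n -> Vec n) :
  is_open O -> C2_on O u ->
  (exists a, 0 <= a /\ forall x, O x -> in_La a (Du u x)) ->
  forall x, O x -> forall al, inf_lap u x al = 0.
Proof.
  intros HO Hu [a [ha HL]] x hx al.
  assert (Hconst : forall y, O y -> frob2 (Du u y) = a).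
  { intros y hy. apply sqrt_inj; [apply frob2_nonneg|exact ha|apply (HL y hy)]. }
  assert (Hgrad : forall i, half_grad_frob2 u x i = 0).
  { intros i. destruct (HO x hx) as [r [hr Hr]].
    assert (D0 : derivable_pt_lim (fun t => frob2 (Du u (shift x i t))) 0 0).
    { apply (derivable_pt_lim_local (fun _ => a)); [apply derivable_pt_lim_const|].
      exists r. split; [exact hr|]. intros t ht. symmetry. apply Hconst, Hr.
      rewrite dist_shift. exact ht. }
    pose proof (uniqueness_limite _ _ _ _ (frob2_partial n O u x i Hu hx) D0). lra. }
  rewrite inf_lap_nondegenerate by apply (HL x hx).
  apply fsum_zero. intros i. rewrite Hgrad. ring.
Qed.

Lemma inf_harmonic_constant_norm n (O : Vec n -> Prop) (u : Vec n -> Vec n) :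
  is_open O -> is_connected O -> C2_on O u -> local_diffeo_on O u ->
  (forall x, O x -> forall al, inf_lap u x al = 0) ->
  exists a, 0 <= a /\ forall x, O x -> in_La a (Du u x).
Proof.
  intros HO Hconn Hu HL Hinf.
  assert (Hdet : forall x, O x -> det (Du u x) <> 0)
    by (intros x hx; apply (local_diffeo_det n O u x HO Hu HL hx)).
  assert (Hgrad : forall x, O x -> forall i, half_grad_frob2 u x i = 0).
  { intros x hx. apply (Determinants.det_neq0_kernel n (Du u x) (Hdet x hx)).
    intros al. rewrite <- inf_lap_nondegenerate by apply (Hdet x hx). apply Hinf, hx. }
  set (f := fun y => frob2 (Du u y)).
  assert (Hloc : forall y, O y -> exists r, r > 0 /\
                  forall z, Defs.dist y z < r -> O z /\ f z = f y).
  { intros y hy. destruct (HO y hy) as [r [hr Hr]]. exists r. split; [exact hr|].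
    intros z hz. split; [apply Hr, hz|].
    apply (zero_partials_constant_on_ball n f y r); [|exact hz].
    intros y' hy' i. pose proof (frob2_partial n O u y' i Hu (Hr y' hy')) as D.
    rewrite (Hgrad y' (Hr y' hy') i), Rmult_0_r in D.
    split; [exists 0; exact D|apply Dp_unique, D]. }
  destruct (classic (exists x0, O x0)) as [[x0 hx0] | Hempty].
  - exists (f x0). split; [apply frob2_nonneg|]. intros x hx. split.
    + f_equal. apply (connected_locally_constant n O f Hconn Hloc x0 x hx0 hx).
    + apply Hdet, hx.
  - exists 0. split; [lra|]. intros x hx. exfalso. apply Hempty. exists x. exact hx.
Qed.

Theorem lemma2p1 (n : nat) (Omega : Vec n -> Prop) (u : Vec n -> Vec n) :
  is_open Omega -> is_connected Omega -> C2_on Omega u ->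
  ((exists a, 0 <= a /\ forall x, Omega x -> in_La a (Du u x)) ->
     forall x, Omega x -> forall al, inf_lap u x al = 0) /\
  (local_diffeo_on Omega u ->
     (forall x, Omega x -> forall al, inf_lap u x al = 0) ->
     exists a, 0 <= a /\ forall x, Omega x -> in_La a (Du u x)).
Proof.
  intros HO Hconn Hu. split.
  - apply constant_norm_inf_harmonic; assumption.
  - intros HL. apply inf_harmonic_constant_norm; assumption.
Qed.
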